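(* Let $\mathbf P=(P,\leq,{}',0,1)$ be a bounded poset which is the horizontal sum of pseudo-orthomodular posets $\mathbf P_{\alpha}=(P_{\alpha},\leq_{\alpha},{}'_{\alpha},0,1)$, $\alpha\in\Lambda$ (with $'$ acting on each summand as $'_\alpha$). Then $\mathbf P$ is a pseudo-orthomodular poset.
   Context: For $M\subseteq P$, $U(M)=\{x\in P\mid y\le x \text{ for all } y\in M\}$ and $L(M)=\{x\in P\mid x\le y\text{ for all }y\in M\}$; write $U(a,b)=U(\{a,b\})$, $L(a,b)=L(\{a,b\})$, and $LU(\cdot)=L(U(\cdot))$ etc. A poset with complementation is a bounded poset $(P,\le,{}',0,1)$ where $'$ is an antitone involution ($x\le y\Rightarrow y'\le x'$, $x''=x$) satisfying $L(x,x')=\{0\}$ and $U(x,x')=\{1\}$ for all $x$. It is pseudo-orthomodular if $L(U(L(x,y),y'),y)=L(x,y)$ for all $x,y\in P$ (equivalently $U(L(U(x,y),y'),y)=U(x,y)$). The horizontal sum of a family of bounded posets is obtained from their disjoint union by identifying all bottom elements into $0$ and all top elements into $1$; elements of different summands other than $0,1$ are incomparable. *)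

From Stdlib Require Import Classical ClassicalEpsilon.

Set Implicit Arguments.

Definition Ucone {T : Type} (le : T -> T -> Prop) (M : T -> Prop) : T -> Prop :=
  fun x => forall y, M y -> le y x.
Definition Lcone {T : Type} (le : T -> T -> Prop) (M : T -> Prop) : T -> Prop :=
  fun x => forall y, M y -> le x y.

Definition pair_set {T : Type} (a b : T) : T -> Prop := fun y => y = a \/ y = b.
Definition single_set {T : Type} (a : T) : T -> Prop := fun y => y = a.
Definition union_set {T : Type} (A B : T -> Prop) : T -> Prop := fun y => A y \/ B y.
Definition set_eq {T : Type} (A B : T -> Prop) : Prop := forall y, A y <-> B y.

Definition is_poset {T : Type} (le : T -> T -> Prop) : Prop :=
  (forall x, le x x) /\
  (forall x y, le x y -> le y x -> x = y) /\
  (forall x y z, le x y -> le y z -> le x z).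

Definition poset_with_complementation {T : Type} (le : T -> T -> Prop)
  (c : T -> T) (z o : T) : Prop :=
  is_poset le /\
  (forall x, le z x /\ le x o) /\
  (forall x y, le x y -> le (c y) (c x)) /\
  (forall x, c (c x) = x) /\
  (forall x, set_eq (Lcone le (pair_set x (c x))) (single_set z)) /\
  (forall x, set_eq (Ucone le (pair_set x (c x))) (single_set o)).

Definition pseudo_orthomodular {T : Type} (le : T -> T -> Prop)
  (c : T -> T) (z o : T) : Prop :=
  poset_with_complementation le c z o /\
  (forall x y,
     set_eq
       (Lcone le (union_set
          (Ucone le (union_set (Lcone le (pair_set x y)) (single_set (c y))))
          (single_set y)))
       (Lcone le (pair_set x y))).

Section HSum.
Variables (Lam : Type) (P : Lam -> Type)
  (leP : forall a, P a -> P a -> Prop) (cP : forall a, P a -> P a)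
  (zP oP : forall a, P a).

Definition inner (a : Lam) : Type := { x : P a | x <> zP a /\ x <> oP a }.

Inductive hsum : Type :=
| HBot : hsum
| HTop : hsum
| HElt : forall a : Lam, inner a -> hsum.

Definition hsum_le (u v : hsum) : Prop :=
  match u, v with
  | HBot, _ => True
  | _, HTop => True
  | @HElt a x, @HElt b y =>
      exists e : a = b, @leP b (eq_rect a P (proj1_sig x) b e) (proj1_sig y)
  | _, _ => False
  end.

Definition hsum_emb (a : Lam) (x : P a) : hsum :=
  match excluded_middle_informative (x = zP a) with
  | left _ => HBot
  | right nz =>
      match excluded_middle_informative (x = oP a) with
      | left _ => HTop
      | right no => @HElt a (exist _ x (conj nz no))
      end
  end.

Definition hsum_comp (u : hsum) : hsum :=
  match u with
  | HBot => HTop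
  | HTop => HBot
  | @HElt a x => @hsum_emb a (cP (proj1_sig x))
  end.
End HSum.

Arguments hsum_le {Lam P} leP zP oP u v.
Arguments hsum_comp {Lam P} cP zP oP u.
Arguments HBot {Lam P zP oP}.
Arguments HTop {Lam P zP oP}.

(* An element w of L(U(L(x,y),y'),y) lies below every upper bound of
   L(x,y) ∪ {y'}.  If y' ≤ x, then x is such an upper bound; if L(x,y) lies
   below y', then y' is one, and w ≤ y, y' forces w = 0.  In a horizontal sum
   one of the two applies unless x and y are inner elements of one summand;
   there every common lower bound of x and y comes from the summand, so an
   upper bound of L(x,y) ∪ {y'} computed in the summand stays one in the sum,
   and the law is inherited from the summand. *)

From Stdlib Require Import Classical ClassicalEpsilon ProofIrrelevance.

Set Implicit Arguments.

Section Complementation.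
Variables (T : Type) (le : T -> T -> Prop) (c : T -> T) (z o : T).

Definition pom_cone (x y : T) : T -> Prop :=
  Lcone le (union_set
    (Ucone le (union_set (Lcone le (pair_set x y)) (single_set (c y))))
    (single_set y)).

Lemma lower_pair_pom_cone x y w : Lcone le (pair_set x y) w -> pom_cone x y w.
Proof.
  intros hw v [hv | ->].
  - apply hv. left. exact hw.
  - apply hw. right. reflexivity.
Qed.

Lemma pom_cone_le_right x y w : pom_cone x y w -> le w y.
Proof. intro hw. apply hw. right. reflexivity. Qed.

Lemma pom_cone_le_upper {x y w v} :
  pom_cone x y w -> (forall u, Lcone le (pair_set x y) u -> le u v) ->
  le (c y) v -> le w v.
Proof. intros hw hL hc. apply hw. left. intros u [hu | ->]; auto. Qed.

Lemma pom_cone_le_of_compl_le x y w : le (c y) x -> pom_cone x y w -> le w x.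
Proof.
  intros hc hw. apply (pom_cone_le_upper hw); [|exact hc].
  intros u hu. apply hu. left. reflexivity.
Qed.

Lemma pseudo_orthomodularI :
  poset_with_complementation le c z o ->
  (forall x y w, pom_cone x y w -> le w x) -> pseudo_orthomodular le c z o.
Proof.
  intros hpc hpom. split; [exact hpc|]. intros x y w. split.
  - intro hw. intros v [-> | ->]; [exact (hpom x y w hw)|].
    exact (pom_cone_le_right hw).
  - apply lower_pair_pom_cone.
Qed.

Lemma pseudo_orthomodular_le x y w :
  pseudo_orthomodular le c z o -> pom_cone x y w -> le w x.
Proof. intros [_ hpom] hw. apply (proj1 (hpom x y w) hw). left. reflexivity. Qed.

Hypothesis pwc : poset_with_complementation le c z o.

Lemma le_refl x : le x x.
Proof. apply pwc. Qed.

Lemma le_antisym {x y} : le x y -> le y x -> x = y.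
Proof. apply pwc. Qed.

Lemma le_trans {x y w} : le x y -> le y w -> le x w.
Proof. apply pwc. Qed.

Lemma le0x x : le z x.
Proof. apply pwc. Qed.

Lemma lex1 x : le x o.
Proof. apply pwc. Qed.

Lemma compl_anti {x y} : le x y -> le (c y) (c x).
Proof. apply pwc. Qed.

Lemma complK x : c (c x) = x.
Proof. apply pwc. Qed.

Lemma compl_lower {x p} : le p x -> le p (c x) -> p = z.
Proof.
  intros h1 h2. destruct pwc as (_ & _ & _ & _ & hL & _).
  apply (hL x p). intros y [-> | ->]; assumption.
Qed.

Lemma compl_upper {x p} : le x p -> le (c x) p -> p = o.
Proof.
  intros h1 h2. destruct pwc as (_ & _ & _ & _ & _ & hU).
  apply (hU x p). intros y [-> | ->]; assumption.
Qed.

Lemma compl0 : c z = o.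
Proof. apply (compl_upper (x := z)); [apply le0x | apply le_refl]. Qed.

Lemma compl_inner x : x <> z -> x <> o -> c x <> z /\ c x <> o.
Proof.
  intros hz ho. split; intro e.
  - apply ho. rewrite <- (complK x), e. exact compl0.
  - apply hz. rewrite <- (complK x), e, <- compl0. apply complK.
Qed.

Lemma pom_cone_eq0 x y w :
  (forall u, Lcone le (pair_set x y) u -> le u (c y)) -> pom_cone x y w -> w = z.
Proof.
  intros hL hw. apply (compl_lower (x := y)); [exact (pom_cone_le_right hw)|].
  exact (pom_cone_le_upper hw hL (le_refl _)).
Qed.

End Complementation.

Section HorizontalSum.
Variables (Lam : Type) (P : Lam -> Type)
  (leP : forall a, P a -> P a -> Prop) (cP : forall a, P a -> P a)
  (zP oP : forall a, P a).
Arguments leP : clear implicits.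
Arguments cP : clear implicits.

Local Notation hs := (hsum P zP oP).
Local Notation hle := (hsum_le leP zP oP).
Local Notation hcompl := (hsum_comp cP zP oP).
Local Notation emb := (hsum_emb P zP oP).
Local Notation inner := (inner P zP oP).

Lemma inner_eq a (x y : inner a) : proj1_sig x = proj1_sig y -> x = y.
Proof.
  destruct x as [x hx], y as [y hy]. simpl. intros ->.
  f_equal. apply proof_irrelevance.
Qed.

Lemma hsum_le_bot (u : hs) : hle HBot u.
Proof. destruct u; exact I. Qed.

Lemma hsum_le_top (u : hs) : hle u HTop.
Proof. destruct u; exact I. Qed.

Lemma hsum_le_bot_eq {u : hs} : hle u HBot -> u = HBot.
Proof. destruct u; simpl; tauto. Qed.

Lemma hsum_le_elt a (x y : inner a) :
  hle (HElt x) (HElt y) <-> leP a (proj1_sig x) (proj1_sig y).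
Proof.
  simpl. split.
  - intros [e h]. rewrite (proof_irrelevance _ e eq_refl) in h. exact h.
  - intro h. exists eq_refl. exact h.
Qed.

Lemma hsum_compl_elt a (x : inner a) : hcompl (HElt x) = emb a (cP a (proj1_sig x)).
Proof. reflexivity. Qed.

Lemma hsum_emb0 a : emb a (zP a) = HBot.
Proof.
  unfold hsum_emb. destruct (excluded_middle_informative _) as [_ | n];
    [reflexivity | contradiction].
Qed.

Lemma hsum_emb_inner a (x : inner a) : emb a (proj1_sig x) = HElt x.
Proof.
  destruct x as [x [hz ho]]. unfold hsum_emb. simpl.
  destruct (excluded_middle_informative _); [contradiction|].
  destruct (excluded_middle_informative _); [contradiction|].
  f_equal. apply inner_eq. reflexivity.
Qed.

Hypothesis summand_pwc :
  forall a, poset_with_complementation (leP a) (cP a) (zP a) (oP a).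

Lemma hsum_emb_le a (p q : P a) : hle (emb a p) (emb a q) <-> leP a p q.
Proof.
  pose proof (summand_pwc a) as pwc.
  assert (below0 : forall r, leP a r (zP a) -> r = zP a)
    by (intros r h; apply (le_antisym pwc); [exact h | apply (le0x pwc)]).
  assert (above1 : forall r, leP a (oP a) r -> r = oP a)
    by (intros r h; apply (le_antisym pwc); [apply (lex1 pwc) | exact h]).
  unfold hsum_emb.
  destruct (excluded_middle_informative (p = zP a)) as [-> | p0].
  { split; intros _; [apply (le0x pwc) | apply hsum_le_bot]. }
  destruct (excluded_middle_informative (q = zP a)) as [-> | q0].
  { split; [|intro h; elim p0; exact (below0 p h)].
    destruct (excluded_middle_informative _); simpl; tauto. }
  destruct (excluded_middle_informative (q = oP a)) as [-> | q1].
  { split; intros _; [apply (lex1 pwc) | apply hsum_le_top]. }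
  destruct (excluded_middle_informative (p = oP a)) as [-> | p1].
  - simpl. split; [tauto | intro h; elim q1; exact (above1 q h)].
  - apply hsum_le_elt.
Qed.

Lemma hsum_below_elt {a} {y : inner a} {u} :
  hle u (HElt y) -> exists p, u = emb a p /\ leP a p (proj1_sig y).
Proof.
  destruct u as [| | b x]; simpl.
  - intros _. exists (zP a). split; [symmetry; apply hsum_emb0 | apply summand_pwc].
  - tauto.
  - intros [e h]. subst b. simpl in h.
    exists (proj1_sig x). split; [symmetry; apply hsum_emb_inner | exact h].
Qed.

Lemma hsum_poset : is_poset hle.
Proof.
  split; [|split].
  - intros [| | a x]; simpl; auto. exists eq_refl. apply (le_refl (summand_pwc a)).
  - intros [| | a x] [| | b y]; simpl; try tauto.
    intros [e h] h'. subst b. simpl in h.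
    apply hsum_le_elt in h'. f_equal. apply inner_eq.
    exact (le_antisym (summand_pwc a) h h').
  - intros [| | a x] [| | b y] [| | d w]; simpl; try tauto.
    intros [e h] [e' h']. subst b d. simpl in *. exists eq_refl.
    exact (le_trans (summand_pwc a) h h').
Qed.

Lemma hsum_compl_anti (u v : hs) : hle u v -> hle (hcompl v) (hcompl u).
Proof.
  destruct u as [| | a x], v as [| | b y]; simpl; intro h;
    try tauto; try apply hsum_le_top; try apply hsum_le_bot.
  destruct h as [e h]. subst b. simpl in h.
  apply hsum_emb_le. exact (compl_anti (summand_pwc a) h).
Qed.

Lemma hsum_complK (u : hs) : hcompl (hcompl u) = u.
Proof.
  destruct u as [| | a [x [hz ho]]]; try reflexivity.
  rewrite hsum_compl_elt. simpl proj1_sig.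
  pose proof (compl_inner (summand_pwc a) hz ho) as hc.
  rewrite (hsum_emb_inner (exist _ (cP a x) hc) : emb a (cP a x) = _).
  rewrite hsum_compl_elt. simpl proj1_sig.
  rewrite (complK (summand_pwc a)).
  exact (hsum_emb_inner (exist _ x (conj hz ho))).
Qed.

Lemma hsum_compl_lower (u : hs) :
  set_eq (Lcone hle (pair_set u (hcompl u))) (single_set HBot).
Proof.
  intro w. unfold single_set. split; [|intros -> v _; apply hsum_le_bot].
  intro hw. pose proof (hw u (or_introl eq_refl)) as h1.
  pose proof (hw (hcompl u) (or_intror eq_refl)) as h2.
  destruct u as [| | a x], w as [| | b w]; try reflexivity; simpl in h1, h2;
    try contradiction.
  destruct h1 as [e h1]. subst b. simpl in h1.
  pose proof (hw _ (or_intror eq_refl)) as hc.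
  rewrite hsum_compl_elt, <- (hsum_emb_inner w), hsum_emb_le in hc.
  exfalso. destruct w as [w [hz ho]]. apply hz. exact (compl_lower (summand_pwc a) h1 hc).
Qed.

Lemma hsum_compl_upper (u : hs) :
  set_eq (Ucone hle (pair_set u (hcompl u))) (single_set HTop).
Proof.
  intro w. unfold single_set. split; [|intros -> v _; apply hsum_le_top].
  intro hw. pose proof (hw u (or_introl eq_refl)) as h1.
  pose proof (hw (hcompl u) (or_intror eq_refl)) as h2.
  destruct u as [| | a x], w as [| | b w]; try reflexivity; simpl in h1, h2;
    try contradiction.
  destruct h1 as [e h1]. subst b. simpl in h1.
  pose proof (hw _ (or_intror eq_refl)) as hc.
  rewrite hsum_compl_elt, <- (hsum_emb_inner w), hsum_emb_le in hc.
  exfalso. destruct w as [w [hz ho]]. apply ho. exact (compl_upper (summand_pwc a) h1 hc).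
Qed.

Lemma hsum_pwc : poset_with_complementation hle hcompl HBot HTop.
Proof.
  split; [exact hsum_poset|].
  split; [intro u; split; [apply hsum_le_bot | apply hsum_le_top]|].
  split; [exact hsum_compl_anti|].
  split; [exact hsum_complK|].
  split; [exact hsum_compl_lower | exact hsum_compl_upper].
Qed.

Lemma hsum_pom_cone_same_summand a (x y : inner a) w :
  pseudo_orthomodular (leP a) (cP a) (zP a) (oP a) ->
  pom_cone hle hcompl (HElt x) (HElt y) w -> hle w (HElt x).
Proof.
  intros hpom hw.
  destruct (hsum_below_elt (pom_cone_le_right hw)) as [r [-> hr]].
  rewrite <- hsum_emb_inner. apply hsum_emb_le.
  apply (pseudo_orthomodular_le (y := proj1_sig y) hpom). intros v [hv | ->]; [|exact hr].
  apply hsum_emb_le. apply hw. left. intros u [hu | ->].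
  - destruct (hsum_below_elt (hu _ (or_intror eq_refl))) as [p [-> hpy]].
    pose proof (hu _ (or_introl eq_refl)) as hpx.
    rewrite <- hsum_emb_inner in hpx. apply hsum_emb_le in hpx.
    apply hsum_emb_le. apply hv. left. intros t [-> | ->]; assumption.
  - apply hsum_emb_le. apply hv. right. reflexivity.
Qed.

Lemma hsum_pom_cone_le (x y w : hs) :
  (forall a, pseudo_orthomodular (leP a) (cP a) (zP a) (oP a)) ->
  pom_cone hle hcompl x y w -> hle w x.
Proof.
  intros hpom hw.
  assert (to_bot : (forall u, Lcone hle (pair_set x y) u -> u = HBot) -> hle w x).
  { intro hL. enough (w = HBot) as -> by apply hsum_le_bot.
    apply (pom_cone_eq0 hsum_pwc (x := x) (y := y)); [|exact hw].
    intros u hu. rewrite (hL u hu). apply hsum_le_bot. }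
  destruct y as [| | a y].
  - rewrite (hsum_le_bot_eq (pom_cone_le_right hw)). apply hsum_le_bot.
  - apply (pom_cone_le_of_compl_le (hsum_le_bot x) hw).
  - destruct x as [| | b x].
    + apply to_bot. intros u hu. apply hsum_le_bot_eq, hu. left. reflexivity.
    + apply hsum_le_top.
    + destruct (classic (b = a)) as [-> | ne].
      * exact (hsum_pom_cone_same_summand (hpom a) hw).
      * apply to_bot. intros [| | d u] hu; [reflexivity | |].
        -- contradiction (hu _ (or_introl eq_refl)).
        -- destruct (hu _ (or_introl eq_refl)) as [<- _].
           destruct (hu _ (or_intror eq_refl)) as [-> _]. contradiction.
Qed.

End HorizontalSum.

Theorem proposition4 (Lam : Type) (P : Lam -> Type)
  (leP : forall a, P a -> P a -> Prop) (cP : forall a, P a -> P a)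
  (zP oP : forall a, P a) :
  (forall a, pseudo_orthomodular (leP a) (cP a) (zP a) (oP a)) ->
  pseudo_orthomodular (hsum_le leP zP oP) (hsum_comp cP zP oP)
    (@HBot Lam P zP oP) (@HTop Lam P zP oP).
Proof.
  intro hpom.
  assert (hpwc : forall a, poset_with_complementation (leP a) (cP a) (zP a) (oP a))
    by (intro a; exact (proj1 (hpom a))).
  apply pseudo_orthomodularI.
  - apply hsum_pwc. exact hpwc.
  - intros x y w. apply hsum_pom_cone_le; assumption.
Qed.
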